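(* Let $X$ be a $T_0$ topological space which is $k$-bounded sober. Then the following are equivalent: (i) the convergence class $\mathcal{I}$ of $\operatorname{Irr}$-convergence on $X$ is topological; (ii) $X$ is $\operatorname{Irr}$-continuous.
   Context: For a topological space $X$, a nonempty subset $E\subseteq X$ is irreducible if whenever $E\subseteq A_1\cup A_2$ with $A_1,A_2$ closed, then $E\subseteq A_1$ or $E\subseteq A_2$. The specialisation order is $x\le y$ iff $x\in\operatorname{cl}(\{y\})$; $\uparrow x=\{z: z\ge x\}$; suprema $\bigvee$ are least upper bounds with respect to this order. $\operatorname{Irr}^+(X)$ denotes the set of irreducible subsets of $X$ whose supremum exists. $X$ is $k$-bounded sober if every closed set $F\in\operatorname{Irr}^+(X)$ is the closure of a unique singleton. The $\operatorname{Irr}$-way-below relation: $x\ll_{\operatorname{Irr}} y$ iff for every $E\in\operatorname{Irr}^+(X)$ with $\bigvee E\ge y$ one has $E\cap\uparrow x\neq\emptyset$; write $\twoheaddownarrow_{\operatorname{Irr}} x=\{y: y\ll_{\operatorname{Irr}} x\}$. $X$ is $\operatorname{Irr}$-continuous if for every $x\in X$, $\twoheaddownarrow_{\operatorname{Irr}} x$ is irreducible in $X$ and $x=\bigvee\twoheaddownarrow_{\operatorname{Irr}} x$. A net $(x_i)_{i\in I}$ in $X$ is a map from a preorder $(I,\le)$ to $X$. A net $(x_i)_{i\in I}$ $\operatorname{Irr}$-converges to $y$ if there is $E\in\operatorname{Irr}^+(X)$ with $\bigvee E\ge y$ such that for each $e\in E$ there is $k(e)\in I$ with $x_i\ge e$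 for all $i\ge k(e)$. $\mathcal{I}$ is the relation between nets in $X$ and points of $X$ consisting of all pairs $((x_i)_{i\in I},y)$ with $(x_i)$ $\operatorname{Irr}$-converging to $y$. A convergence class $\mathcal{S}$ on $X$ is topological if there is a topology $\sigma$ on $X$ such that $((x_i),x)\in\mathcal{S}$ iff for every $U\in\sigma$ with $x\in U$ there is $i_0$ with $x_i\in U$ for all $i\ge i_0$. *)

From HB Require Import structures.
From mathcomp Require Import all_boot all_order.
From mathcomp Require Import all_classical topology.
Set Implicit Arguments. Unset Strict Implicit. Unset Printing Implicit Defensive.
Local Open Scope classical_set_scope.

Section IrrDefs.
Variable X : topologicalType.

Definition spec_le (x y : X) : Prop := closure [set y] x.

Definition upper_set (x : X) : set X := [set z | spec_le x z].

Definition irreducible (E : set X) : Prop :=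
  E !=set0 /\
  forall A1 A2 : set X, closed A1 -> closed A2 ->
    E `<=` A1 `|` A2 -> E `<=` A1 \/ E `<=` A2.

Definition is_sup (E : set X) (s : X) : Prop :=
  (forall e, E e -> spec_le e s) /\
  (forall u, (forall e, E e -> spec_le e u) -> spec_le s u).

Definition IrrPlus (E : set X) : Prop := irreducible E /\ exists s, is_sup E s.

Definition k_bounded_sober : Prop :=
  forall F : set X, closed F -> IrrPlus F -> exists! x : X, F = closure [set x].

Definition irr_way_below (x y : X) : Prop :=
  forall E : set X, IrrPlus E ->
    forall s, is_sup E s -> spec_le y s -> exists2 e, E e & spec_le x e.

Definition irr_ddown (x : X) : set X := [set y | irr_way_below y x].

Definition irr_continuous : Prop :=
  forall x : X, irreducible (irr_ddown x) /\ is_sup (irr_ddown x) x.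

Definition irr_converges (I : Type) (le : I -> I -> Prop) (x : I -> X) (y : X)
  : Prop :=
  exists E : set X, IrrPlus E /\
    (exists s, is_sup E s /\ spec_le y s) /\
    forall e, E e -> exists k : I, forall i, le k i -> spec_le e (x i).

Definition is_topology_on (sigma : set (set X)) : Prop :=
  sigma setT /\
  (forall U V, sigma U -> sigma V -> sigma (U `&` V)) /\
  (forall (F : set (set X)), F `<=` sigma -> sigma (\bigcup_(U in F) U)).

Definition irr_convergence_topological : Prop :=
  exists sigma : set (set X), is_topology_on sigma /\
    forall (I : Type) (le : I -> I -> Prop),
      (forall i, le i i) -> (forall i j k, le i j -> le j k -> le i k) ->
      forall (x : I -> X) (y : X),
        irr_converges le x y <->
        (forall U, sigma U -> U y -> exists i0 : I, forall i, le i0 i -> U (x i)).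

End IrrDefs.

(* Irr-convergence is always finer than convergence in the "Irr-Scott" topology, whose opens are the
   upper sets U such that every E in Irr^+(X) with sup E in U meets U.  If the convergence is
   topological, the net of points of neighbourhoods of x converges to x, and its witness E lies in
   the Irr-way-below set of x; k-bounded sobriety puts sup E in the closure of E, which makes that
   set irreducible with supremum x.  Conversely, for an Irr-continuous space the way-below
   relation interpolates, so the sets {z | e << z} are Irr-Scott open; a net eventually in all of
   them Irr-converges, with witness the way-below set of the limit. *)
From mathcomp Require Import all_boot all_order.
From mathcomp Require Import all_classical topology.
Set Implicit Arguments. Unset Strict Implicit. Unset Printing Implicit Defensive.
Local Open Scope classical_set_scope.

Section IrrScott.
Variable X : topologicalType.
Implicit Types (x y z : X) (A B E S T U : set X).

Lemma closure_minimal A B : closed A -> B `<=` A -> closure B `<=` A.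
Proof. by move=> cA BA; rewrite (closure_id A).1 //; apply: closureS. Qed.

Lemma spec_le_refl x : spec_le x x.
Proof. exact: subset_closure. Qed.
Arguments spec_le_refl : clear implicits.

Lemma closed_spec_le_down A x y : closed A -> A y -> spec_le x y -> A x.
Proof. by move=> cA Ay; apply: closure_minimal => // z ->. Qed.

Lemma spec_le_trans x y z : spec_le x y -> spec_le y z -> spec_le x z.
Proof. by move=> xy yz; exact: closed_spec_le_down (@closed_closure _ _) yz xy. Qed.

Lemma upper_bound_closure E u :
  (forall e, E e -> spec_le e u) -> closure E `<=` closure [set u].
Proof. by move=> ub; apply: closure_minimal => //; exact: closed_closure. Qed.

Lemma irreducible_closure_eq S T :
  S `<=` closure T -> T `<=` closure S -> irreducible S -> irreducible T.
Proof.
move=> ST TS [[s Ss] irrS]; split.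
  by apply/set0P/negP => /eqP T0; have := ST _ Ss; rewrite T0 closure0.
move=> A1 A2 cA1 cA2 TA.
have SA : S `<=` A1 `|` A2.
  by apply: subset_trans ST _; apply: closure_minimal => //; exact: closedU.
by have [SA1|SA2] := irrS _ _ cA1 cA2 SA; [left|right];
  apply: subset_trans TS _; apply: closure_minimal.
Qed.

Lemma is_sup_closure_eq S T s :
  S `<=` closure T -> T `<=` closure S -> is_sup S s -> is_sup T s.
Proof.
move=> ST TS [ubS lubS]; split=> [e Te|u ubT].
  exact: upper_bound_closure ubS _ (TS _ Te).
by apply: lubS => e Se; exact: upper_bound_closure ubT _ (ST _ Se).
Qed.

Lemma is_sup1 x : is_sup [set x] x.
Proof. by split=> [e ->|u]; [exact: spec_le_refl|apply]. Qed.

Lemma IrrPlus1 x : IrrPlus [set x].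
Proof.
split; last by exists x; exact: is_sup1.
split; first by exists x.
by move=> A1 A2 _ _ cov; have [?|?] := cov x erefl; [left|right] => z ->.
Qed.

Lemma irr_way_belowW x y : irr_way_below x y -> spec_le x y.
Proof. by move=> xy; have [e ->] := xy _ (IrrPlus1 y) y (is_sup1 y) (spec_le_refl y). Qed.

Lemma irr_way_below_le_trans x y z :
  irr_way_below x y -> spec_le y z -> irr_way_below x z.
Proof. by move=> xy yz E HE s Hs zs; apply: (xy E HE s Hs); exact: spec_le_trans zs. Qed.

Lemma le_irr_way_below_trans x' x y :
  spec_le x' x -> irr_way_below x y -> irr_way_below x' y.
Proof.
move=> x'x xy E HE s Hs ys; have [e Ee xe] := xy E HE s Hs ys.
by exists e => //; exact: spec_le_trans xe.
Qed.

Lemma irr_converges_const (I : Type) (le : I -> I -> Prop) (i0 : I) x y :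
  spec_le y x -> irr_converges le (fun _ : I => x) y.
Proof.
move=> yx; exists [set x]; split; first exact: IrrPlus1.
split; first by exists x; split=> //; exact: is_sup1.
by move=> e ->; exists i0 => i _; exact: spec_le_refl.
Qed.

Lemma irr_converges_sval E s : IrrPlus E -> is_sup E s ->
  irr_converges (fun i j : {e : X | E e} => spec_le (sval i) (sval j)) sval s.
Proof.
move=> HE Hs; exists E; split=> //; split; first by exists s; split=> //; exact: spec_le_refl.
by move=> e Ee; exists (exist _ e Ee).
Qed.

Definition irr_open U : Prop :=
  (forall x y, U x -> spec_le x y -> U y) /\
  (forall E, IrrPlus E -> forall s, is_sup E s -> U s -> exists2 e, E e & U e).

Lemma irr_open_not_dense_complement U E s : irr_open U -> IrrPlus E -> is_sup E s ->
  U s -> ~ E `<=` closure (E `\` U).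
Proof.
move=> [_ inaccU] [irrE _] supE Us EU.
have EUE : E `\` U `<=` closure E by move=> z [/subset_closure].
have irrEU := irreducible_closure_eq EU EUE irrE.
have supEU := is_sup_closure_eq EU EUE supE.
by have [e [_ nUe] Ue] := inaccU _ (conj irrEU (ex_intro _ s supEU)) s supEU Us.
Qed.

Lemma irr_open_topology : is_topology_on irr_open.
Proof.
split; [|split].
- by split=> // E [[[e Ee] _] _] s _ _; exists e.
- move=> U V oU oV; split=> [x y [Ux Vx] xy|E HE s Hs [Us Vs]].
    by split; [exact: oU.1 xy|exact: oV.1 xy].
  apply: contrapT => noUV.
  have cov : E `<=` closure (E `\` U) `|` closure (E `\` V).
    move=> e Ee; have [Ue|nUe] := pselect (U e); last by left; exact: subset_closure.
    have [Ve|nVe] := pselect (V e); first by exfalso; apply: noUV; exists e.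
    by right; exact: subset_closure.
  have [EU|EV] := HE.1.2 _ _ (@closed_closure _ _) (@closed_closure _ _) cov.
    exact: irr_open_not_dense_complement oU HE Hs Us EU.
  exact: irr_open_not_dense_complement oV HE Hs Vs EV.
- move=> F oF; split=> [x y [U FU Ux] xy|E HE s Hs [U FU Us]].
    by exists U => //; exact: (oF U FU).1 xy.
  have [e Ee Ue] := (oF U FU).2 E HE s Hs Us.
  by exists e => //; exists U.
Qed.

Lemma irr_open_upper_irr_way_below U e x :
  irr_open U -> U x -> U `<=` upper_set e -> irr_way_below e x.
Proof.
move=> [upU inaccU] Ux Ue F HF t Ht xt.
have [f Ff Uf] := inaccU F HF t Ht (upU _ _ Ux xt).
by exists f => //; exact: Ue.
Qed.

Lemma irr_converges_eventually_irr_open (I : Type) (le : I -> I -> Prop) (x : I -> X) y U :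
  irr_converges le x y -> irr_open U -> U y -> exists i0, forall i, le i0 i -> U (x i).
Proof.
move=> [E [HE [[s [Hs ys]] ev]]] [upU inaccU] Uy.
have [e Ee Ue] := inaccU E HE s Hs (upU _ _ Uy ys).
by have [i0 ev0] := ev e Ee; exists i0 => i /ev0; exact: upU.
Qed.

End IrrScott.

Arguments spec_le_refl {X} x.

Section BoundedSober.
Variable X : topologicalType.
Hypothesis ks : k_bounded_sober X.

Lemma is_sup_in_closure (E : set X) s : IrrPlus E -> is_sup E s -> closure E s.
Proof.
move=> [irrE _] supE.
have EcE : E `<=` closure (closure E) by move=> e Ee; do 2!apply: subset_closure.
have cEE : closure E `<=` closure E by [].
have cE_sup := is_sup_closure_eq EcE cEE supE.
have [x [cEx _]] := ks (@closed_closure _ E)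
  (conj (irreducible_closure_eq EcE cEE irrE) (ex_intro _ s cE_sup)).
by rewrite cEx in cE_sup *; apply: cE_sup.2.
Qed.

Lemma irr_continuous_at_of_approximation (E : set X) s x :
  IrrPlus E -> is_sup E s -> spec_le x s -> E `<=` irr_ddown x ->
  irreducible (irr_ddown x) /\ is_sup (irr_ddown x) x.
Proof.
move=> HE Hs xs Ex.
have Ecl : E `<=` closure (irr_ddown x) by move=> e /Ex/subset_closure.
have clE : irr_ddown x `<=` closure E.
  move=> d dx; apply: closed_spec_le_down (@closed_closure _ _) (is_sup_in_closure HE Hs) _.
  exact: spec_le_trans (irr_way_belowW dx) xs.
split; first exact: irreducible_closure_eq Ecl clE HE.1.
split=> [d /irr_way_belowW //|u ub].
exact: spec_le_trans xs (Hs.2 _ (fun e Ee => ub e (Ex e Ee))).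
Qed.

Section Continuous.
Hypothesis cont : irr_continuous X.

Lemma irr_way_below_interpolation (x y : X) :
  irr_way_below x y -> exists2 d, irr_way_below x d & irr_way_below d y.
Proof.
move=> xy.
pose Es := [set z | exists2 d, irr_way_below d y & irr_way_below z d].
have Es_sub : Es `<=` closure (irr_ddown y).
  move=> z [d dy zd]; apply: closed_spec_le_down (@closed_closure _ _) _ (irr_way_belowW zd).
  exact: subset_closure.
have sub_Es : irr_ddown y `<=` closure Es.
  move=> d dy; have [irr_d sup_d] := cont d.
  apply: closureS (is_sup_in_closure (conj irr_d (ex_intro _ d sup_d)) sup_d).
  by move=> z zd; exists d.
have [irr_y sup_y] := cont y.
have sup_Es := is_sup_closure_eq sub_Es Es_sub sup_y.
have irr_Es := irreducible_closure_eq sub_Es Es_sub irr_y.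
have [z [d dy zd] xz] :=
  xy Es (conj irr_Es (ex_intro _ y sup_Es)) y sup_Es (spec_le_refl y).
by exists d => //; exact: le_irr_way_below_trans xz zd.
Qed.

Lemma irr_open_way_above (x : X) : irr_open [set z | irr_way_below x z].
Proof.
split=> [a b xa ab|E HE s Hs xs]; first exact: irr_way_below_le_trans xa ab.
have [d xd ds] := irr_way_below_interpolation xs.
have [z Ez dz] := ds E HE s Hs (spec_le_refl s).
by exists z => //; exact: irr_way_below_le_trans xd dz.
Qed.

Lemma eventually_irr_open_irr_converges (I : Type) (le : I -> I -> Prop) (x : I -> X) y :
  (forall U, irr_open U -> U y -> exists i0, forall i, le i0 i -> U (x i)) ->
  irr_converges le x y.
Proof.
move=> ev; have [irr_y sup_y] := cont y.
exists (irr_ddown y); split; first by split=> //; exists y.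
split; first by exists y; split=> //; exact: spec_le_refl.
move=> e ey; have [i0 ev0] := ev _ (irr_open_way_above e) ey.
by exists i0 => i /ev0/irr_way_belowW.
Qed.

End Continuous.
End BoundedSober.

Section TopologicalConvergence.
Variable X : topologicalType.
Variable sigma : set (set X).
Hypothesis sigma_conv : forall (I : Type) (le : I -> I -> Prop),
  (forall i, le i i) -> (forall i j k, le i j -> le j k -> le i k) ->
  forall (x : I -> X) (y : X),
    irr_converges le x y <->
    (forall U, sigma U -> U y -> exists i0 : I, forall i, le i0 i -> U (x i)).

Lemma sigma_irr_open U : sigma U -> irr_open U.
Proof.
move=> sU; split=> [y x Uy yx|E HE s Hs Us].
  have [i0 ev] := (sigma_conv (le := fun _ _ : unit => True)
    (fun=> I) (fun _ _ _ _ _ => I) _ y).1 (irr_converges_const _ tt yx) U sU Uy.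
  exact: ev i0 I.
pose le := fun i j : {e | E e} => spec_le (sval i) (sval j).
have [[e Ee] ev] := (sigma_conv (le := le) (fun i => spec_le_refl (sval i))
  (fun i j k => @spec_le_trans X _ _ _) _ s).1 (irr_converges_sval HE Hs) U sU Us.
by exists e => //; apply: (ev (exist _ e Ee)); exact: spec_le_refl.
Qed.

Lemma irr_approximation (x : X) :
  exists E s, [/\ IrrPlus E, is_sup E s, spec_le x s & E `<=` irr_ddown x].
Proof.
pose J := {p : set X * X | [/\ sigma p.1, p.1 x & p.1 p.2]}.
pose le := fun i j : J => (sval j).1 `<=` (sval i).1.
have conv : irr_converges le (fun i => (sval i).2) x.
  apply/(sigma_conv (le := le) (fun i => @subset_refl _ _)).
    by move=> i j k ij jk; exact: subset_trans jk ij.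
  move=> U sU Ux; exists (exist _ (U, x) (And3 sU Ux Ux)) => i VU.
  by apply: VU; case: (svalP i).
have [E [HE [[s [Hs xs]] ev]]] := conv.
exists E, s; split=> // e Ee.
have [[[U0 z0] P] ev0] := ev e Ee; have [sU0 U0x _] := P.
apply: (irr_open_upper_irr_way_below (sigma_irr_open sU0) U0x) => z U0z.
exact: (ev0 (exist _ (U0, z) (And3 sU0 U0x U0z)) (@subset_refl _ _)).
Qed.

End TopologicalConvergence.

Theorem theorem1p1 (X : topologicalType) :
  kolmogorov_space X -> k_bounded_sober X ->
  (irr_convergence_topological X <-> irr_continuous X).
Proof.
move=> _ ks; split=> [[sigma [_ sigma_conv]] x|cont].
- have [E [s [HE Hs xs Ex]]] := irr_approximation sigma_conv x.
  exact: (irr_continuous_at_of_approximation ks HE Hs xs Ex).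
- exists (@irr_open X); split; first exact: irr_open_topology.
  move=> I le _ _ x y; split=> [conv U|]; first exact: irr_converges_eventually_irr_open.
  exact: (eventually_irr_open_irr_converges ks cont).
Qed.
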